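(* Let $\kappa$ be strongly inaccessible and let $\mathrm{fid}(\mathbb Q_\kappa)=\{A\subseteq 2^\kappa : (\forall p\in\mathbb Q_\kappa)(\exists q\le p)\ [q]\cap A=\emptyset\}$. Then $\mathrm{fid}(\mathbb Q_\kappa)=\mathrm{wid}(\mathbb Q_\kappa)$.
   Context: For a cardinal $\lambda$, $S^\lambda_{\mathrm{inc}}$ is the set of strongly inaccessible cardinals below $\lambda$. A set $S\subseteq\lambda$ is nowhere stationary if for every $\delta\le\lambda$ of uncountable cofinality, $S\cap\delta$ is nonstationary in $\delta$. By induction on strongly inaccessible $\lambda$ one defines a forcing $\mathbb Q_\lambda$ and an ideal $\mathrm{id}(\mathbb Q_\lambda)$ on $2^\lambda$: $p\in\mathbb Q_\lambda$ iff $p\subseteq 2^{<\lambda}$ is closed under initial segments and there is a witness $(\tau,S,\langle N_\delta:\delta\in S\rangle)$ with: (i) $\tau$ is the trunk of $p$, the least node of $p$ having two immediate successors in $p$; (ii) if $\tau\trianglelefteq\eta\in p$ then $\eta^\frown0,\eta^\frown1\in p$; (iii) $S\subseteq S^\lambda_{\mathrm{inc}}$ is nowhere stationary; (iv) $N_\delta\in\mathrm{id}(\mathbb Q_\delta)$ for $\delta\in S$; (v) for limit $\delta<\lambda$ with $\delta\notin S$ and $\eta\in2^\delta$: $\eta\in p$ iff $\eta\restriction\sigma\in p$ for all $\sigma<\delta$; (vi) for $\delta\in S$ and $\eta\in 2^\delta$: $\eta\in p$ iff $\eta\restriction\sigma\in p$ for all $\sigma<\delta$ and $\eta\notin N_\delta$.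 The order is $q\le p$ iff $q\subseteq p$. $[p]$ is the set of $x\in 2^\lambda$ all of whose proper initial segments lie in $p$; for $\mathcal J\subseteq\mathbb Q_\lambda$, $\mathrm{set}_0(\mathcal J)=2^\lambda\setminus\bigcup_{p\in\mathcal J}[p]$. $A\in\mathrm{id}(\mathbb Q_\lambda)$ iff there are at most $\lambda$ predense sets $\mathcal J_i\subseteq\mathbb Q_\lambda$ with $A\subseteq\bigcup_i\mathrm{set}_0(\mathcal J_i)$. $\mathrm{wid}(\mathbb Q_\kappa)$ is the family of $A\subseteq2^\kappa$ with $A\subseteq\mathrm{set}_0(\mathcal A)$ for some maximal antichain $\mathcal A\subseteq\mathbb Q_\kappa$. *)

(* Ordinals <= kappa are modelled by a well-ordered type K
   (order type kappa, the "top" bound kappa itself is [None : option K]). *)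
From Stdlib Require Import Bool Wellfounded.

Section Q.
Variable K : Type.
Variable lt : K -> K -> bool.

Definition below (x : K) (c : option K) : Prop :=
  match c with None => True | Some d => lt x d = true end.

Definition leb_bd (c b : option K) : Prop :=
  c = b \/ exists d, c = Some d /\ below d b.

Definition uncountable (c : option K) : Prop :=
  ~ exists f : K -> nat,
      forall x y, below x c -> below y c -> f x = f y -> x = y.

Definition regular (c : option K) : Prop :=
  forall g, below g c -> forall f : K -> K,
    (forall x, lt x g = true -> below (f x) c) ->
    exists beta, below beta c /\ forall x, lt x g = true -> lt (f x) beta = true.

(* strong limit: for all gamma < c, 2^|gamma| < |c|, i.e. no injection of
   Seg c into the functions Seg gamma -> bool *)
Definition strong_limit (c : option K) : Prop :=
  forall g, below g c ->
    ~ exists F : K -> K -> bool,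
        forall x y, below x c -> below y c ->
          (forall z, lt z g = true -> F x z = F y z) -> x = y.

Definition strongly_inaccessible (c : option K) : Prop :=
  uncountable c /\ regular c /\ strong_limit c.

Definition cof_uncountable (c : option K) : Prop :=
  (exists x, below x c) /\
  forall f : nat -> K, (forall n, below (f n) c) ->
    exists beta, below beta c /\ forall n, lt (f n) beta = true.

Definition club (c : option K) (C : K -> Prop) : Prop :=
  (forall x, C x -> below x c) /\
  (forall x, below x c -> exists y, C y /\ lt x y = true) /\
  (forall gm, below gm c -> (exists x, lt x gm = true) ->
     (forall x, lt x gm = true -> exists y, C y /\ lt x y = true /\ lt y gm = true) ->
     C gm).

Definition nonstationary_in (c : option K) (S : K -> Prop) : Prop :=
  exists C, club c C /\ forall x, C x -> below x c -> ~ S x.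

Definition nowhere_stationary (b : option K) (S : K -> Prop) : Prop :=
  forall c, leb_bd c b -> cof_uncountable c -> nonstationary_in c S.

Definition is_limit (d : K) : Prop :=
  (exists x, lt x d = true) /\
  forall x, lt x d = true -> exists y, lt x y = true /\ lt y d = true.

(* ---- sequences: a node of 2^{<kappa} is (a, f) with f canonical of length a ---- *)
Definition canonb (c : option K) (f : K -> bool) : Prop :=
  forall x, ~ below x c -> f x = false.

Definition restr (f : K -> bool) (a : K) : K -> bool := fun x => lt x a && f x.

Definition is_succ (a s : K) : Prop :=
  lt a s = true /\ forall x, ~ (lt a x = true /\ lt x s = true).

Definition ext (f : K -> bool) (a s : K) (i : bool) : K -> bool :=
  fun x => if lt x a then f x else if lt x s then i else false.

Definition tree := K -> (K -> bool) -> Prop.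

Definition in_ext (p : tree) (a : K) (f : K -> bool) (i : bool) : Prop :=
  exists s, is_succ a s /\ p s (ext f a s i).

Definition iseg (a : K) (f : K -> bool) (c : K) (g : K -> bool) : Prop :=
  lt c a = false /\ f = restr g a.

(* ---- the forcing Q_b, given the ideals id(Q_d) for d < b ---- *)
Section Stage.
Variable b : option K.
Variable G : forall d : K, below d b -> ((K -> bool) -> Prop) -> Prop.

Definition subtree_of (p : tree) : Prop :=
  forall a f, p a f -> below a b /\ canonb (Some a) f.

Definition closed_init (p : tree) : Prop :=
  forall a c g, p c g -> lt c a = false -> p a (restr g a).

Definition Q (p : tree) : Prop :=
  subtree_of p /\ closed_init p /\
  exists (ta : K) (tf : K -> bool) (S : K -> Prop) (N : K -> (K -> bool) -> Prop),
    (p ta tf /\ in_ext p ta tf false /\ in_ext p ta tf true /\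
    forall a f, p a f -> in_ext p a f false -> in_ext p a f true ->
       iseg ta tf a f) /\
    (forall a f, p a f -> iseg ta tf a f ->
       in_ext p a f false /\ in_ext p a f true) /\
    (forall d, S d -> below d b /\ strongly_inaccessible (Some d)) /\
   nowhere_stationary b S /\
    (forall d (h : below d b), S d -> G d h (N d)) /\
    (forall d, below d b -> is_limit d -> ~ S d -> forall f, canonb (Some d) f ->
       (p d f <-> forall s, lt s d = true -> p s (restr f s))) /\
    (forall d, below d b -> S d -> forall f, canonb (Some d) f ->
       (p d f <-> (forall s, lt s d = true -> p s (restr f s)) /\ ~ N d f)).

Definition le_Q (q p : tree) : Prop := forall a f, q a f -> p a f.

Definition compatible (p q : tree) : Prop :=
  exists r, Q r /\ le_Q r p /\ le_Q r q.

Definition predense (J : tree -> Prop) : Prop :=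
  (forall p, J p -> Q p) /\ forall p, Q p -> exists q, J q /\ compatible p q.

Definition body (p : tree) (x : K -> bool) : Prop :=
  canonb b x /\ forall a, below a b -> p a (restr x a).

Definition set0 (J : tree -> Prop) (x : K -> bool) : Prop :=
  canonb b x /\ forall p, J p -> ~ body p x.

Definition idQ (A : (K -> bool) -> Prop) : Prop :=
  (forall x, A x -> canonb b x) /\
  exists J : K -> tree -> Prop,
    (forall i, below i b -> predense (J i)) /\
   forall x, A x -> exists i, below i b /\ set0 (J i) x.

Definition max_antichain (AC : tree -> Prop) : Prop :=
  (forall p, AC p -> Q p) /\
  (forall p q, AC p -> AC q -> p <> q -> ~ compatible p q) /\
  (forall p, Q p -> exists q, AC q /\ compatible p q).

Definition wid (A : (K -> bool) -> Prop) : Prop :=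
  exists AC, max_antichain AC /\ forall x, A x -> set0 AC x.

Definition fid (A : (K -> bool) -> Prop) : Prop :=
  forall p, Q p -> exists q, Q q /\ le_Q q p /\ forall x, body q x -> ~ A x.

End Stage.

Definition idf (wf : well_founded (fun x y => lt x y = true)) :
  K -> ((K -> bool) -> Prop) -> Prop :=
  Fix wf (fun _ => ((K -> bool) -> Prop) -> Prop)
      (fun d IH => idQ (Some d) (fun d' h => IH d' h)).

Definition Gtop (wf : well_founded (fun x y => lt x y = true)) :
  forall d : K, below d None -> ((K -> bool) -> Prop) -> Prop :=
  fun d _ => idf wf d.

Definition strict_total_order : Prop :=
  (forall x, lt x x = false) /\
  (forall x y z, lt x y = true -> lt y z = true -> lt x z = true) /\
  (forall x y, lt x y = true \/ x = y \/ lt y x = true).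

End Q.

From Stdlib Require Import Wellfounded.
From mathcomp Require Import all_boot boolp classical_sets.

(* Given density, Zorn's lemma yields a maximal antichain among those
   conditions; it is maximal in the whole forcing because every condition
   extends to one of them, and A misses the union of the bodies of its
   members.  Conversely, any p is compatible with some member a of an antichain
   witnessing wid, and a common extension q has [q] inside [a], hence disjoint
   from A. *)

Lemma exists_maximal_pairwise (T : Type) (D : T -> Prop) (R : T -> T -> Prop) :
  (forall p q, R p q -> R q p) ->
  exists M : T -> Prop,
    [/\ forall p, M p -> D p,
        forall p q, M p -> M q -> p <> q -> R p q
      & forall q, D q -> M q \/ exists2 a, M a & ~ R q a].
Proof.
move=> Rsym.
pose pairwise_in_D (X : T -> Prop) :=
  (forall p, X p -> D p) /\ (forall p q, X p -> X q -> p <> q -> R p q).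
have [|M [[MD MR] Mmax]] := @Zorn_bigcup T pairwise_in_D.
  move=> F FP Ftot; split=> [p [X /FP [XD _] /XD]|] //.
  move=> p q [X /[dup] FX /FP [_ XR] Xp] [Y /[dup] FY /FP [_ YR] Yq].
  case: (Ftot X Y FX FY) => [XY|YX]; first by apply: YR => //; exact: XY.
  by apply: XR => //; exact: YX.
exists M; split=> // q Dq.
have [Mq|nMq] := pselect (M q); first by left.
right; apply: contrapT => noblock.
have Rq a : M a -> R q a.
  by move=> Ma; apply: contrapT => nR; apply: noblock; exists a.
apply: (Mmax (fun x => M x \/ x = q)).
  by split=> [x Mx|/(_ q (or_intror erefl))]; [left|].
split=> [p [/MD|->]|p r [Mp|->] [Mr|->] pr] //.
- exact: MR.
- exact/Rsym/Rq.
- exact: Rq.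
Qed.

Section FidWid.
Variables (K : Type) (lt : K -> K -> bool) (b : option K).
Variable G : forall d : K, below K lt d b -> ((K -> bool) -> Prop) -> Prop.

Lemma body_le {q p : tree K} {x : K -> bool} :
  le_Q K q p -> body K lt b q x -> body K lt b p x.
Proof. by move=> qp [xcan xq]; split=> // a /xq /qp. Qed.

Lemma compatible_sym {p q : tree K} :
  compatible K lt b G p q -> compatible K lt b G q p.
Proof. by case=> r [Qr [rp rq]]; exists r. Qed.

Lemma compatible_refl (q : tree K) : Q K lt b G q -> compatible K lt b G q q.
Proof. by move=> Qq; exists q; split=> //; split=> // c f. Qed.

Lemma compatible_le {q p a : tree K} :
  le_Q K q p -> compatible K lt b G q a -> compatible K lt b G p a.
Proof.
by move=> qp [r [Qr [rq ra]]]; exists r; split=> //; split=> // c f /rq /qp.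
Qed.

Lemma fid_sub_wid (A : (K -> bool) -> Prop) :
  (forall x, A x -> canonb K lt b x) -> fid K lt b G A -> wid K lt b G A.
Proof.
move=> Acan Afid.
pose avoids_A q := Q K lt b G q /\ forall x, body K lt b q x -> ~ A x.
have [M [MD Minc Mmax]] := @exists_maximal_pairwise _ avoids_A
  (fun p q => ~ compatible K lt b G p q)
  (fun p q npq qp => npq (compatible_sym qp)).
exists M; split.
  split=> [p /MD []|] //; split=> // p Qp.
  have [q [Qq [qp qA]]] := Afid p Qp.
  have [a [Ma qa]] : exists a, M a /\ compatible K lt b G q a.
    case: (Mmax q (conj Qq qA)) => [Mq|[a Ma /contrapT qa]]; last by exists a.
    by exists q; split=> //; exact: compatible_refl.
  by exists a; split=> //; exact: compatible_le qa.
by move=> x Ax; split=> [|p /MD [_ pA] /pA]; [exact: Acan|].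
Qed.

Lemma wid_sub_fid (A : (K -> bool) -> Prop) :
  wid K lt b G A -> fid K lt b G A.
Proof.
move=> [M [[_ [_ Mmax]] MA]] p Qp.
have [a [Ma [q [Qq [qp qa]]]]] := Mmax p Qp.
exists q; split=> //; split=> // x /(body_le qa) xa Ax.
by case: (MA x Ax) => _ /(_ a Ma).
Qed.

End FidWid.

Lemma canonb_top (K : Type) (lt : K -> K -> bool) (x : K -> bool) :
  canonb K lt None x.
Proof. by move=> y /(_ I). Qed.

Theorem lemma3p3 (K : Type) (lt : K -> K -> bool)
  (hord : strict_total_order K lt)
  (wf : well_founded (fun x y => lt x y = true))
  (hkappa : strongly_inaccessible K lt None)
  (A : (K -> bool) -> Prop) :
  fid K lt None (Gtop K lt wf) A <-> wid K lt None (Gtop K lt wf) A.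
Proof.
split; first by apply: fid_sub_wid => x _; exact: canonb_top.
exact: wid_sub_fid.
Qed.
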